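(* Let $\varphi$ be an action of a group $G$ on a strict monoidal category $\mathcal C$, let $g,h,k,\ell\in G$ and $(X,\gamma^g_X)\in\mathcal Z_g(\mathcal C)$, $(Y,\gamma^h_Y)\in\mathcal Z_h(\mathcal C)$. Then: (a) $\varphi_\ell^{-2}(X,Y):\varphi_\ell X\otimes\varphi_\ell Y\to\varphi_\ell(X\otimes Y)$ is a morphism in $\mathcal Z_G(\mathcal C)$ from $\Phi_\ell(X,\gamma^g_X)\odot\Phi_\ell(Y,\gamma^h_Y)$ to $\Phi_\ell((X,\gamma^g_X)\odot(Y,\gamma^h_Y))$; (b) $\varphi_\ell^0:\varphi_\ell(\mathbf 1)\to\mathbf 1$ is a morphism from $\Phi_\ell(\mathbf 1,\mathrm{id})$ to $(\mathbf 1,\mathrm{id})$; (c) $\varphi_{k,\ell,X}:\varphi_k(\varphi_\ell X)\to\varphi_{k\ell}X$ is a morphism from $\Phi_k(\Phi_\ell(X,\gamma^g_X))$ to $\Phi_{k\ell}(X,\gamma^g_X)$; (d) $\gamma^g_{X,Y}:X\otimes Y\to\varphi_g(Y)\otimes X$ is a morphism from $(X,\gamma^g_X)\odot(Y,\gamma^h_Y)$ to $\Phi_g(Y,\gamma^h_Y)\odot(X,\gamma^g_X)$. Here ''morphism in $\mathcal Z_G(\mathcal C)$'' means a morphism in $\mathcal C$ between the underlying objects that commutes with the respective half-braidings (in particular both objects lie in the same component $\mathcal Z_m(\mathcal C)$).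
   Context: All monoidal categories are strict. Comonoidal functor $(F,F^2,F^0)$: $F^0:F\mathbf 1\to\mathbf 1$, $F^2(X,Y):F(X\otimes Y)\to FX\otimes FY$ natural with $(F^2(X,Y)\otimes FZ)F^2(X\otimes Y,Z)=(FX\otimes F^2(Y,Z))F^2(X,Y\otimes Z)$, $(FX\otimes F^0)F^2(X,\mathbf 1)=\mathrm{id}=(F^0\otimes FX)F^2(\mathbf 1,X)$; strong if invertible, $F^{-2}$ the inverse of $F^2$. An action $\varphi$ of $G$ on $\mathcal C$: comonoidal endofunctors $(\varphi_g,\varphi_g^2,\varphi_g^0)$ with $\varphi_e=\mathrm{Id}$, and comonoidal natural isomorphisms $\varphi_{g,h}:\varphi_g\varphi_h\to\varphi_{gh}$ (components $\varphi_{g,h,X}$) with $\varphi_{gh,k,X}\varphi_{g,h,\varphi_kX}=\varphi_{g,hk,X}\varphi_g(\varphi_{h,k,X})$ and $\varphi_{g,e,X}=\mathrm{id}=\varphi_{e,g,X}$; each $\varphi_g$ is then strong comonoidal. Notation: $\varphi_{g_1,\dots,g_n,V}:=\varphi_{g_1\cdots g_{n-1},g_n,V}\circ\varphi_{g_1,\dots,g_{n-1},\varphi_{g_n}V}$ for $n\ge3$. For a morphism $u:A_1\otimes A_2\to B_1\otimes B_2$ write $g.u:=\varphi_g^2(B_1,B_2)\circ\varphi_g(u)\circ\varphi_g^{-2}(A_1,A_2)$. An $F$-half-braiding on $X$ (for a comonoidal endofunctor $F$) is a family of isomorphisms $\gamma_{X,V}:X\otimes V\to FV\otimes X$ natural in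 $V$ with $(F^2(V,W)\otimes X)\gamma_{X,V\otimes W}=(FV\otimes\gamma_{X,W})(\gamma_{X,V}\otimes W)$ and $(F^0\otimes X)\gamma_{X,\mathbf 1}=\mathrm{id}_X$. $\mathcal Z_g(\mathcal C)$ is the category of pairs $(X,\gamma^g_X)$ with $\gamma^g_X$ a $\varphi_g$-half-braiding on $X$, morphisms being morphisms $f$ of $\mathcal C$ with $(\varphi_gV\otimes f)\gamma_{X_1,V}=\gamma_{X_2,V}(f\otimes V)$; $\mathcal Z_G(\mathcal C)=\coprod_g\mathcal Z_g(\mathcal C)$. Product: $(X,\gamma^g_X)\odot(Y,\gamma^h_Y)=(X\otimes Y,\gamma_{X\otimes Y})$ with $\gamma_{X\otimes Y,V}=(\varphi_{g,h,V}\otimes X\otimes Y)(\gamma^g_{X,\varphi_hV}\otimes Y)(X\otimes\gamma^h_{Y,V})$, an object of $\mathcal Z_{gh}(\mathcal C)$. For $\ell\in G$ and $(X,\gamma^h_X)\in\mathcal Z_h(\mathcal C)$, $\Phi_\ell(X,\gamma^h_X):=(\varphi_\ell X,\gamma_{\ell X})$ where $\gamma_{\ell X,V}:=(\varphi_{\ell,h,\ell^{-1},V}\otimes\varphi_\ell X)\circ \ell.(\gamma^h_{X,\varphi_{\ell^{-1}}V})\circ(\varphi_\ell X\otimes\varphi^{-1}_{\ell,\ell^{-1},V}):\varphi_\ell X\otimes V\to\varphi_{\ell h\ell^{-1}}(V)\otimes\varphi_\ell X$; this is a $\varphi_{\ell h\ell^{-1}}$-half-braiding, so $\Phi_\ell(X,\gamma^h_X)\in\mathcal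 Z_{\ell h\ell^{-1}}(\mathcal C)$, and $\Phi_\ell$ acts on morphisms by $f\mapsto\varphi_\ell(f)$. *)

Set Implicit Arguments.
Unset Strict Implicit.

Record Group := {
  gcar :> Type;
  gmul : gcar -> gcar -> gcar;
  gone : gcar;
  ginv : gcar -> gcar;
  gmulA : forall a b c, gmul a (gmul b c) = gmul (gmul a b) c;
  gmul1l : forall a, gmul gone a = a;
  gmul1r : forall a, gmul a gone = a;
  gmulVl : forall a, gmul (ginv a) a = gone;
  gmulVr : forall a, gmul a (ginv a) = gone
}.
Arguments gmul {g}.
Arguments gone {g}.
Arguments ginv {g}.

(* Category presented by its objects and its (total) type of arrows with
   source/target maps; [comp g f] is "g o f", only meaningful when
   [tgt f = src g]. *)
Record SMCat := {
  Ob : Type;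
  Mor : Type;
  src : Mor -> Ob;
  tgt : Mor -> Ob;
  idm : Ob -> Mor;
  comp : Mor -> Mor -> Mor;
  src_id : forall X, src (idm X) = X;
  tgt_id : forall X, tgt (idm X) = X;
  src_comp : forall g f, tgt f = src g -> src (comp g f) = src f;
  tgt_comp : forall g f, tgt f = src g -> tgt (comp g f) = tgt g;
  comp_id_l : forall f, comp (idm (tgt f)) f = f;
  comp_id_r : forall f, comp f (idm (src f)) = f;
  comp_assoc : forall h g f, tgt f = src g -> tgt g = src h ->
      comp h (comp g f) = comp (comp h g) f;
  tens : Ob -> Ob -> Ob;
  tensM : Mor -> Mor -> Mor;
  unit : Ob;
  src_tens : forall f g, src (tensM f g) = tens (src f) (src g);
  tgt_tens : forall f g, tgt (tensM f g) = tens (tgt f) (tgt g);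
  tens_id : forall X Y, tensM (idm X) (idm Y) = idm (tens X Y);
  tens_comp : forall f f' g g', tgt f = src f' -> tgt g = src g' ->
      tensM (comp f' f) (comp g' g) = comp (tensM f' g') (tensM f g);
  tens_assoc : forall X Y Z, tens (tens X Y) Z = tens X (tens Y Z);
  tensM_assoc : forall f g h, tensM (tensM f g) h = tensM f (tensM g h);
  tens_unit_l : forall X, tens unit X = X;
  tens_unit_r : forall X, tens X unit = X;
  tensM_unit_l : forall f, tensM (idm unit) f = f;
  tensM_unit_r : forall f, tensM f (idm unit) = f
}.
Arguments src {s}. Arguments tgt {s}. Arguments idm {s}. Arguments comp {s}.
Arguments tens {s}. Arguments tensM {s}. Arguments unit {s}.

Section Defs.
Variable C : SMCat.

Definition is_iso (f : Mor C) : Prop :=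
  exists f' : Mor C, src f' = tgt f /\ tgt f' = src f /\
    comp f' f = idm (src f) /\ comp f f' = idm (tgt f).

Record ComonEndo := {
  Fo : Ob C -> Ob C;
  Fm : Mor C -> Mor C;
  F2 : Ob C -> Ob C -> Mor C;
  F0 : Mor C;
  Fsrc : forall f, src (Fm f) = Fo (src f);
  Ftgt : forall f, tgt (Fm f) = Fo (tgt f);
  Fid : forall X, Fm (idm X) = idm (Fo X);
  Fcomp : forall g f, tgt f = src g -> Fm (comp g f) = comp (Fm g) (Fm f);
  F2src : forall X Y, src (F2 X Y) = Fo (tens X Y);
  F2tgt : forall X Y, tgt (F2 X Y) = tens (Fo X) (Fo Y);
  F2nat : forall f g, comp (F2 (tgt f) (tgt g)) (Fm (tensM f g))
                     = comp (tensM (Fm f) (Fm g)) (F2 (src f) (src g));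
  F0src : src F0 = Fo unit;
  F0tgt : tgt F0 = unit;
  F2coassoc : forall X Y Z,
      comp (tensM (F2 X Y) (idm (Fo Z))) (F2 (tens X Y) Z)
    = comp (tensM (idm (Fo X)) (F2 Y Z)) (F2 X (tens Y Z));
  F2counit_r : forall X, comp (tensM (idm (Fo X)) F0) (F2 X unit) = idm (Fo X);
  F2counit_l : forall X, comp (tensM F0 (idm (Fo X))) (F2 unit X) = idm (Fo X)
}.

Definition half_braiding (F : ComonEndo) (X : Ob C) (gam : Ob C -> Mor C) : Prop :=
  (forall V, src (gam V) = tens X V /\ tgt (gam V) = tens (Fo F V) X /\ is_iso (gam V))
  /\ (forall f, comp (tensM (Fm F f) (idm X)) (gam (src f))
              = comp (gam (tgt f)) (tensM (idm X) f))
  /\ (forall V W, comp (tensM (F2 F V W) (idm X)) (gam (tens V W))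
                = comp (tensM (idm (Fo F V)) (gam W)) (tensM (gam V) (idm W)))
  /\ comp (tensM (F0 F) (idm X)) (gam unit) = idm X.

End Defs.

Arguments Fo {C}. Arguments Fm {C}. Arguments F2 {C}. Arguments F0 {C}.

Section Action.
Variables (G : Group) (C : SMCat).

Record Action := {
  act : G -> ComonEndo C;
  (* the inverse of phi_g^2 (phi_g is strong comonoidal) *)
  act2inv : G -> Ob C -> Ob C -> Mor C;
  act2inv_spec : forall g X Y,
      src (act2inv g X Y) = tens (Fo (act g) X) (Fo (act g) Y) /\
      tgt (act2inv g X Y) = Fo (act g) (tens X Y) /\
      comp (act2inv g X Y) (F2 (act g) X Y) = idm (Fo (act g) (tens X Y)) /\
      comp (F2 (act g) X Y) (act2inv g X Y) = idm (tens (Fo (act g) X) (Fo (act g) Y));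
  act_e_o : forall X, Fo (act gone) X = X;
  act_e_m : forall f, Fm (act gone) f = f;
  act_e_2 : forall X Y, F2 (act gone) X Y = idm (tens X Y);
  act_e_0 : F0 (act gone) = idm unit;
  actc : G -> G -> Ob C -> Mor C;
  actcinv : G -> G -> Ob C -> Mor C;
  actc_spec : forall g h X,
      src (actc g h X) = Fo (act g) (Fo (act h) X) /\
      tgt (actc g h X) = Fo (act (gmul g h)) X /\
      src (actcinv g h X) = Fo (act (gmul g h)) X /\
      tgt (actcinv g h X) = Fo (act g) (Fo (act h) X) /\
      comp (actcinv g h X) (actc g h X) = idm (Fo (act g) (Fo (act h) X)) /\
      comp (actc g h X) (actcinv g h X) = idm (Fo (act (gmul g h)) X);
  actc_nat : forall g h f,
      comp (actc g h (tgt f)) (Fm (act g) (Fm (act h) f))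
    = comp (Fm (act (gmul g h)) f) (actc g h (src f));
  actc_comon2 : forall g h X Y,
      comp (tensM (actc g h X) (actc g h Y))
           (comp (F2 (act g) (Fo (act h) X) (Fo (act h) Y)) (Fm (act g) (F2 (act h) X Y)))
    = comp (F2 (act (gmul g h)) X Y) (actc g h (tens X Y));
  actc_comon0 : forall g h,
      comp (F0 (act (gmul g h))) (actc g h unit) = comp (F0 (act g)) (Fm (act g) (F0 (act h)));
  actc_cocycle : forall g h k X,
      comp (actc (gmul g h) k X) (actc g h (Fo (act k) X))
    = comp (actc g (gmul h k) X) (Fm (act g) (actc h k X));
  actc_e_r : forall g X, actc g gone X = idm (Fo (act g) X);
  actc_e_l : forall g X, actc gone g X = idm (Fo (act g) X)
}.

Variable phi : Action.

Notation phio g := (Fo (act phi g)).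
Notation phim g := (Fm (act phi g)).

Definition actc3 (g1 g2 g3 : G) (V : Ob C) : Mor C :=
  comp (actc phi (gmul g1 g2) g3 V) (actc phi g1 g2 (phio g3 V)).

Definition gdot (g : G) (A1 A2 B1 B2 : Ob C) (u : Mor C) : Mor C :=
  comp (F2 (act phi g) B1 B2) (comp (phim g u) (act2inv phi g A1 A2)).

(* Raw objects of Z_G(C): a degree g, an object X and a family gamma_{X,-}.
   Membership in Z_g(C) is the predicate [half_braiding (act phi g) X gamma]. *)
Record ZObj := mkZ { zdeg : G; zob : Ob C; zbr : Ob C -> Mor C }.

Definition inZ (A : ZObj) : Prop := half_braiding (act phi (zdeg A)) (zob A) (zbr A).

Definition Zprod (A B : ZObj) : ZObj :=
  mkZ (gmul (zdeg A) (zdeg B)) (tens (zob A) (zob B))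
    (fun V => comp (tensM (actc phi (zdeg A) (zdeg B) V) (idm (tens (zob A) (zob B))))
               (comp (tensM (zbr A (phio (zdeg B) V)) (idm (zob B)))
                     (tensM (idm (zob A)) (zbr B V)))).

Definition Zact (l : G) (A : ZObj) : ZObj :=
  let h := zdeg A in let X := zob A in
  mkZ (gmul (gmul l h) (ginv l)) (phio l X)
    (fun V =>
       comp (tensM (actc3 l h (ginv l) V) (idm (phio l X)))
         (comp (gdot l X (phio (ginv l) V) (phio h (phio (ginv l) V)) X
                     (zbr A (phio (ginv l) V)))
               (tensM (idm (phio l X)) (actcinv phi l (ginv l) V)))).

Definition Zunit : ZObj := mkZ gone unit (fun V => idm V).

Definition Zhom (A B : ZObj) (f : Mor C) : Prop :=
  zdeg A = zdeg B /\ src f = zob A /\ tgt f = zob B /\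
  forall V, comp (tensM (idm (phio (zdeg A) V)) f) (zbr A V)
          = comp (zbr B V) (tensM f (idm V)).

End Action.

Arguments act {G C}. Arguments act2inv {G C}. Arguments actc {G C}.
Arguments actcinv {G C}.
Arguments mkZ {G C}.

(* Then (b) follows from the counit law of phi_l^2, (d) from a computation of
   the braiding of Phi_g(Y) at objects phi_g V, (c) from the intertwining
   property of phi_{k,l}, and (a) by bringing both half-braidings to a common
   normal form. *)

Set Implicit Arguments.

Section GroupFacts.
Variable G : Group.

Lemma ginv_unique (a b : G) : gmul a b = gone -> b = ginv a.
Proof.
  intro H. rewrite <- (gmul1l b), <- (gmulVl a), <- gmulA, H. apply gmul1r.
Qed.

Lemma ginv_mul (a b : G) : ginv (gmul a b) = gmul (ginv b) (ginv a).
Proof.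
  symmetry. apply ginv_unique.
  rewrite gmulA, <- (gmulA a b), gmulVr, gmul1r. apply gmulVr.
Qed.

Lemma gmulK (a b : G) : gmul (gmul a b) (ginv b) = a.
Proof. rewrite <- gmulA, gmulVr. apply gmul1r. Qed.

Lemma gmulVK (a b : G) : gmul (gmul a (ginv b)) b = a.
Proof. rewrite <- gmulA, gmulVl. apply gmul1r. Qed.
End GroupFacts.

Hint Rewrite gmulA gmul1l gmul1r gmulVl gmulVr gmulK gmulVK ginv_mul : group_simpl.
Hint Rewrite tens_assoc tens_unit_l tens_unit_r : obj_simpl.
Hint Rewrite tensM_assoc tens_id tensM_unit_l tensM_unit_r Fid src_id tgt_id
  : mor_simpl.
Hint Rewrite src_id tgt_id src_tens tgt_tens Fsrc Ftgt F2src F2tgt F0src F0tgt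
  : type_simpl.

Section MonoidalCalculus.
Variable C : SMCat.
Implicit Types f g h x a b c d e r : Mor C.

Lemma comp_id_l_at f X : tgt f = X -> comp (idm X) f = f.
Proof. intros <-. apply comp_id_l. Qed.

Lemma comp_id_r_at f X : src f = X -> comp f (idm X) = f.
Proof. intros <-. apply comp_id_r. Qed.

Lemma comp_assoc_r h g f : tgt f = src g -> tgt g = src h ->
  comp (comp h g) f = comp h (comp g f).
Proof. intros. symmetry. apply comp_assoc; auto. Qed.

Lemma tensM_comp f f' g g' : tgt f = src f' -> tgt g = src g' ->
  comp (tensM f' g') (tensM f g) = tensM (comp f' f) (comp g' g).
Proof. intros. symmetry. apply tens_comp; auto. Qed.

Lemma tensM_tens_id_l X Y f : tensM (idm (tens X Y)) f = tensM (idm X) (tensM (idm Y) f).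
Proof. rewrite <- tens_id. apply tensM_assoc. Qed.

Lemma tensM_tens_id_r X Y f : tensM f (idm (tens X Y)) = tensM (tensM f (idm X)) (idm Y).
Proof. rewrite <- tens_id. symmetry. apply tensM_assoc. Qed.

Lemma chain_rewrite2 a b c x : comp a b = c -> tgt b = src a -> tgt x = src b ->
  comp a (comp b x) = comp c x.
Proof. intros <- ? ?. apply comp_assoc; auto. Qed.

Lemma chain_rewrite3 a b c d x : comp a (comp b c) = d ->
  tgt c = src b -> tgt b = src a -> tgt x = src c ->
  comp a (comp b (comp c x)) = comp d x.
Proof.
  intros <- ? ? ?. rewrite (@comp_assoc _ b c x) by auto.
  apply comp_assoc; auto. rewrite src_comp; auto. rewrite tgt_comp; auto.
Qed.

Lemma chain_rewrite4 a b c d e x : comp a (comp b (comp c d)) = e ->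
  tgt d = src c -> tgt c = src b -> tgt b = src a -> tgt x = src d ->
  comp a (comp b (comp c (comp d x))) = comp e x.
Proof.
  intros <- ? ? ? ?. rewrite (@comp_assoc _ c d x) by auto.
  apply chain_rewrite3; auto. rewrite tgt_comp; auto. rewrite src_comp; auto.
Qed.

Lemma chain_rewrite5 a b c d e r x : comp a (comp b (comp c (comp d e))) = r ->
  tgt e = src d -> tgt d = src c -> tgt c = src b -> tgt b = src a -> tgt x = src e ->
  comp a (comp b (comp c (comp d (comp e x)))) = comp r x.
Proof.
  intros <- ? ? ? ? ?. rewrite (@comp_assoc _ d e x) by auto.
  apply chain_rewrite4; auto. rewrite tgt_comp; auto. rewrite src_comp; auto.
Qed.
End MonoidalCalculus.

(* [typecheck] proves the source/target side conditions: it computes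
   sources and targets of composites (unfolding the conjugation [gdot]), uses
   typing hypotheses from the context and normalises the resulting objects. *)
Ltac typecheck :=
  try unfold gdot;
  repeat (first [ progress (autorewrite with type_simpl) | typecheck_comp | typecheck_hyp ]);
  autorewrite with group_simpl obj_simpl; reflexivity
with typecheck_comp :=
  match goal with
  | |- context [src (comp ?g ?f)] => rewrite (@src_comp _ g f) by typecheck
  | |- context [tgt (comp ?g ?f)] => rewrite (@tgt_comp _ g f) by typecheck
  end
with typecheck_hyp :=
  match goal with
  | H : forall V, src (?f V) = _ |- context [src (?f _)] => rewrite H
  | H : forall V, tgt (?f V) = _ |- context [tgt (?f _)] => rewrite H
  | H : src ?x = _ |- context [src ?x] => rewrite H
  | H : tgt ?x = _ |- context [tgt ?x] => rewrite H
  end.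

Ltac normalize :=
  repeat (first [ progress (autorewrite with group_simpl obj_simpl mor_simpl type_simpl)
  | match goal with |- context [tensM (idm (tens ?X ?Y)) ?f] =>
      match f with idm _ => fail 1 | _ => rewrite (@tensM_tens_id_l _ X Y f) end end ]).
Ltac assoc_right := repeat (rewrite comp_assoc_r by typecheck).
Ltac drop_ids := repeat (first [ rewrite comp_id_l_at by typecheck
                               | rewrite comp_id_r_at by typecheck ]).
Ltac simplify_ids := drop_ids; normalize; drop_ids.
Ltac chain_rw E :=
  first [ rewrite E
        | rewrite (chain_rewrite2 _ _ _ _ E) by typecheck
        | rewrite (chain_rewrite3 _ _ _ _ _ E) by typecheck
        | rewrite (chain_rewrite4 _ _ _ _ _ _ E) by typecheck
        | rewrite (chain_rewrite5 _ _ _ _ _ _ _ E) by typecheck ];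
  assoc_right.
Ltac chain_rw_back E := chain_rw (eq_sym E).
Ltac group_pair a b := rewrite (@comp_assoc _ a b) by typecheck.
Ltac insert_id_l L X := rewrite <- (@comp_id_l_at _ L X) by typecheck.

Section Interchange.
Variable C : SMCat.
Implicit Types f g h x a b : Mor C.

Lemma interchange_at f g X1 X2 Y1 Y2 :
  src f = X1 -> src g = X2 -> tgt f = Y1 -> tgt g = Y2 ->
  comp (tensM (idm Y1) g) (tensM f (idm X2)) = comp (tensM f (idm Y2)) (tensM (idm X1) g).
Proof.
  intros <- <- <- <-. rewrite !tensM_comp by typecheck. simplify_ids. reflexivity.
Qed.

Lemma interchange_chain_at f g x X1 X2 Y1 Y2 :
  src f = X1 -> src g = X2 -> tgt f = Y1 -> tgt g = Y2 -> tgt x = tens X1 X2 ->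
  comp (tensM (idm Y1) g) (comp (tensM f (idm X2)) x)
  = comp (tensM f (idm Y2)) (comp (tensM (idm X1) g) x).
Proof.
  intros. rewrite !(@comp_assoc _ (tensM _ _) (tensM _ _) x) by typecheck.
  rewrite (@interchange_at f g X1 X2 Y1 Y2) by assumption. reflexivity.
Qed.

Lemma tensM_comp_chain f f' g g' x :
  tgt f = src f' -> tgt g = src g' -> tgt x = src (tensM f g) ->
  comp (tensM f' g') (comp (tensM f g) x) = comp (tensM (comp f' f) (comp g' g)) x.
Proof.
  intros. rewrite <- tensM_comp by auto. apply comp_assoc; typecheck.
Qed.

Lemma whisker_r_comp a b X : tgt b = src a ->
  tensM (comp a b) (idm X) = comp (tensM a (idm X)) (tensM b (idm X)).
Proof. intro. rewrite tensM_comp by typecheck. simplify_ids. reflexivity. Qed.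

Lemma whisker_l_comp a b X : tgt b = src a ->
  tensM (idm X) (comp a b) = comp (tensM (idm X) a) (tensM (idm X) b).
Proof. intro. rewrite tensM_comp by typecheck. simplify_ids. reflexivity. Qed.

Lemma whisker_lr_comp a b X Y : tgt b = src a ->
  tensM (idm X) (tensM (comp a b) (idm Y))
  = comp (tensM (idm X) (tensM a (idm Y))) (tensM (idm X) (tensM b (idm Y))).
Proof. intro. rewrite whisker_r_comp, whisker_l_comp by typecheck. reflexivity. Qed.

Lemma tensM_split_l a b f : tgt b = src a ->
  tensM (comp a b) f = comp (tensM a (idm (tgt f))) (tensM b f).
Proof. intro. rewrite tensM_comp by typecheck. rewrite comp_id_l. reflexivity. Qed.

Lemma tensM_split_r a b f : tgt b = src a ->
  tensM f (comp a b) = comp (tensM (idm (tgt f)) a) (tensM f b).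
Proof. intro. rewrite tensM_comp by typecheck. rewrite comp_id_l. reflexivity. Qed.

Lemma tensM_unit_absorb f g h : tgt g = unit -> tgt h = src f ->
  comp f (tensM g h) = tensM g (comp f h).
Proof.
  intros Hg Hh. transitivity (comp (tensM (idm unit) f) (tensM g h)).
  - rewrite tensM_unit_l. reflexivity.
  - rewrite tensM_comp, <- Hg, comp_id_l by typecheck. reflexivity.
Qed.

Lemma inverse_unique a b m A B :
  comp b m = idm A -> comp m a = idm B -> tgt a = A -> src b = B ->
  tgt a = src m -> tgt m = src b -> a = b.
Proof.
  intros H1 H2 H3 H4 H5 H6. rewrite <- (@comp_id_l_at _ a A), <- H1 by auto.
  rewrite <- comp_assoc by auto. rewrite H2. apply comp_id_r_at. auto.
Qed.

Lemma cancel_whiskered_inverse (m m' R : Mor C) X A :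
  comp m' m = idm A -> src m = A -> tgt m = src m' -> tgt R = tens X A ->
  comp (tensM (idm X) m') (comp (tensM (idm X) m) R) = R.
Proof.
  intros Hinv Hs Ht HR. rewrite comp_assoc, tensM_comp, Hinv by typecheck.
  simplify_ids. reflexivity.
Qed.
End Interchange.

Section ActionCalculus.
Variables (G : Group) (C : SMCat) (phi : Action G C).
Notation phio g := (Fo (act phi g)).
Notation phim g := (Fm (act phi g)).

Lemma actc_src g h X : src (actc phi g h X) = phio g (phio h X).
Proof. apply (actc_spec phi g h X). Qed.
Lemma actc_tgt g h X : tgt (actc phi g h X) = phio (gmul g h) X.
Proof. apply (actc_spec phi g h X). Qed.
Lemma actcinv_src g h X : src (actcinv phi g h X) = phio (gmul g h) X.
Proof. apply (actc_spec phi g h X). Qed.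
Lemma actcinv_tgt g h X : tgt (actcinv phi g h X) = phio g (phio h X).
Proof. apply (actc_spec phi g h X). Qed.
Lemma actcinv_actc g h X :
  comp (actcinv phi g h X) (actc phi g h X) = idm (phio g (phio h X)).
Proof. apply (actc_spec phi g h X). Qed.
Lemma actc_actcinv g h X :
  comp (actc phi g h X) (actcinv phi g h X) = idm (phio (gmul g h) X).
Proof. apply (actc_spec phi g h X). Qed.
Lemma act2inv_src g X Y : src (act2inv phi g X Y) = tens (phio g X) (phio g Y).
Proof. apply (act2inv_spec phi g X Y). Qed.
Lemma act2inv_tgt g X Y : tgt (act2inv phi g X Y) = phio g (tens X Y).
Proof. apply (act2inv_spec phi g X Y). Qed.
Lemma act2inv_F2 g X Y :
  comp (act2inv phi g X Y) (F2 (act phi g) X Y) = idm (phio g (tens X Y)).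
Proof. apply (act2inv_spec phi g X Y). Qed.
Lemma F2_act2inv g X Y :
  comp (F2 (act phi g) X Y) (act2inv phi g X Y) = idm (tens (phio g X) (phio g Y)).
Proof. apply (act2inv_spec phi g X Y). Qed.

Hint Rewrite (act_e_o phi) : obj_simpl.
Hint Rewrite (act_e_m phi) (act_e_2 phi) (act_e_0 phi) (actc_e_l phi) (actc_e_r phi)
  : mor_simpl.
Hint Rewrite actc_src actc_tgt actcinv_src actcinv_tgt act2inv_src act2inv_tgt
  : type_simpl.

Ltac cocycle_at a b c V H :=
  pose proof (actc_cocycle phi a b c V) as H;
  autorewrite with group_simpl obj_simpl mor_simpl in H;
  repeat (first [ rewrite comp_id_l_at in H by typecheck
                | rewrite comp_id_r_at in H by typecheck ]).

Lemma act2inv_unit_l l W : act2inv phi l unit W = tensM (F0 (act phi l)) (idm (phio l W)).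
Proof.
  rewrite <- (@comp_id_r_at _ (tensM (F0 (act phi l)) (idm (phio l W)))
                (tens (phio l unit) (phio l W))) by typecheck.
  rewrite <- F2_act2inv, comp_assoc, F2counit_l by typecheck.
  simplify_ids. reflexivity.
Qed.

(* Coassociativity of phi_l^2, solved for phi_l^2(X ⊗ Q, Y). *)
Lemma F2_tens_l l X Q Y : F2 (act phi l) (tens X Q) Y =
  comp (tensM (act2inv phi l X Q) (idm (phio l Y)))
    (comp (tensM (idm (phio l X)) (F2 (act phi l) Q Y)) (F2 (act phi l) X (tens Q Y))).
Proof.
  chain_rw_back (F2coassoc (act phi l) X Q Y).
  rewrite tensM_comp_chain, act2inv_F2 by typecheck. simplify_ids. reflexivity.
Qed.

(* The inverse phi_l^{-2} is coassociative, as the inverse of a coassociative map. *)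
Lemma act2inv_coassoc l X Y Z :
  comp (act2inv phi l (tens X Y) Z) (tensM (act2inv phi l X Y) (idm (phio l Z)))
  = comp (act2inv phi l X (tens Y Z)) (tensM (idm (phio l X)) (act2inv phi l Y Z)).
Proof.
  apply (@inverse_unique _ _ _
           (comp (tensM (idm (phio l X)) (F2 (act phi l) Y Z)) (F2 (act phi l) X (tens Y Z)))
           (phio l (tens X (tens Y Z))) (tens (phio l X) (tens (phio l Y) (phio l Z))));
    try typecheck.
  - assoc_right. rewrite tensM_comp_chain, act2inv_F2 by typecheck. simplify_ids.
    rewrite act2inv_F2. simplify_ids. reflexivity.
  - rewrite <- F2coassoc. assoc_right. chain_rw (F2_act2inv l (tens X Y) Z). simplify_ids.
    rewrite tensM_comp, F2_act2inv by typecheck. simplify_ids. reflexivity.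
Qed.

Lemma act_actc_inv a g V : phim a (actc phi (ginv g) g V)
  = comp (actc phi (gmul a (ginv g)) g V) (actc phi a (ginv g) (phio g V)).
Proof.
  cocycle_at a (ginv g) g V E. rewrite E. reflexivity.
Qed.

Lemma act_actc_inv_self g V : phim g (actc phi (ginv g) g V) = actc phi g (ginv g) (phio g V).
Proof. rewrite act_actc_inv. simplify_ids. reflexivity. Qed.

Lemma actc_conj_shift l h V :
  comp (actcinv phi l (ginv l) (phio (gmul (gmul l h) (ginv l)) V))
    (comp (actc phi (gmul l h) (ginv l) V) (actc phi l h (phio (ginv l) V)))
  = comp (phim l (actcinv phi (ginv l) (gmul (gmul l h) (ginv l)) V))
      (phim l (actc phi h (ginv l) V)).
Proof.
  match goal with |- _ = ?R =>
    insert_id_l R (phio l (phio (ginv l) (phio (gmul (gmul l h) (ginv l)) V))) end.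
  rewrite <- (actcinv_actc l (ginv l)). assoc_right.
  cocycle_at l (ginv l) (gmul (gmul l h) (ginv l)) V H. chain_rw H.
  group_pair (phim l (actc phi (ginv l) (gmul (gmul l h) (ginv l)) V))
             (phim l (actcinv phi (ginv l) (gmul (gmul l h) (ginv l)) V)).
  rewrite <- Fcomp, actc_actcinv by typecheck. simplify_ids.
  cocycle_at l h (ginv l) V H2. chain_rw_back H2. reflexivity.
Qed.

Lemma actc_conj_merge l g h V :
  comp (actc phi (gmul (gmul l g) (ginv l)) (gmul (gmul l h) (ginv l)) V)
   (comp (actc phi (gmul l g) (ginv l) (phio (gmul (gmul l h) (ginv l)) V))
    (comp (actc phi l g (phio (ginv l) (phio (gmul (gmul l h) (ginv l)) V)))
     (comp (phim l (phim g (actcinv phi (ginv l) (gmul (gmul l h) (ginv l)) V)))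
       (phim l (phim g (actc phi h (ginv l) V))))))
  = comp (actc phi (gmul (gmul l g) h) (ginv l) V)
     (comp (actc phi l (gmul g h) (phio (ginv l) V)) (phim l (actc phi g h (phio (ginv l) V)))).
Proof.
  pose proof (actc_nat phi l g (actcinv phi (ginv l) (gmul (gmul l h) (ginv l)) V)) as N1.
  autorewrite with type_simpl group_simpl obj_simpl in N1. chain_rw N1.
  pose proof (actc_nat phi l g (actc phi h (ginv l) V)) as N2.
  autorewrite with type_simpl group_simpl obj_simpl in N2. chain_rw N2.
  cocycle_at (gmul l g) (ginv l) (gmul (gmul l h) (ginv l)) V H. chain_rw H.
  group_pair (phim (gmul l g) (actc phi (ginv l) (gmul (gmul l h) (ginv l)) V))
             (phim (gmul l g) (actcinv phi (ginv l) (gmul (gmul l h) (ginv l)) V)).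
  rewrite <- Fcomp, actc_actcinv by typecheck. simplify_ids.
  cocycle_at (gmul l g) h (ginv l) V H2. chain_rw_back H2.
  cocycle_at l g h (phio (ginv l) V) H3. chain_rw H3. reflexivity.
Qed.

Lemma actcinv_mul_inv k l V : actcinv phi (gmul k l) (gmul (ginv l) (ginv k)) V =
  comp (phim (gmul k l) (actc phi (ginv l) (ginv k) V))
   (comp (actc phi k l (phio (ginv l) (phio (ginv k) V)))
     (comp (phim k (actcinv phi l (ginv l) (phio (ginv k) V))) (actcinv phi k (ginv k) V))).
Proof.
  match goal with |- _ = ?R =>
    insert_id_l R (phio (gmul k l) (phio (gmul (ginv l) (ginv k)) V)) end.
  rewrite <- actcinv_actc. assoc_right.
  cocycle_at (gmul k l) (ginv l) (ginv k) V H1. chain_rw_back H1.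
  cocycle_at k l (ginv l) (phio (ginv k) V) H2. chain_rw H2.
  group_pair (phim k (actc phi l (ginv l) (phio (ginv k) V)))
             (phim k (actcinv phi l (ginv l) (phio (ginv k) V))).
  rewrite <- Fcomp, actc_actcinv by typecheck. simplify_ids.
  rewrite actc_actcinv. simplify_ids. reflexivity.
Qed.

Lemma actc_conj_compose g k l V :
  comp (actc phi (gmul (gmul k l) g) (gmul (ginv l) (ginv k)) V)
   (comp (actc phi (gmul k l) g (phio (gmul (ginv l) (ginv k)) V))
     (phim (gmul k l) (phim g (actc phi (ginv l) (ginv k) V))))
  = comp (actc phi (gmul (gmul (gmul k l) g) (ginv l)) (ginv k) V)
     (comp (actc phi k (gmul (gmul l g) (ginv l)) (phio (ginv k) V))
      (comp (phim k (actc phi (gmul l g) (ginv l) (phio (ginv k) V)))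
       (comp (phim k (actc phi l g (phio (ginv l) (phio (ginv k) V))))
         (actcinv phi k l (phio g (phio (ginv l) (phio (ginv k) V))))))).
Proof.
  match goal with |- ?L = _ =>
    rewrite <- (@comp_id_r_at _ L (phio (gmul k l) (phio g (phio (ginv l) (phio (ginv k) V)))))
      by typecheck end.
  rewrite <- (actc_actcinv k l). assoc_right.
  pose proof (actc_nat phi (gmul k l) g (actc phi (ginv l) (ginv k) V)) as N.
  autorewrite with type_simpl group_simpl obj_simpl in N. chain_rw N.
  cocycle_at (gmul (gmul k l) g) (ginv l) (ginv k) V H1. chain_rw_back H1.
  cocycle_at k l g (phio (ginv l) (phio (ginv k) V)) H2. chain_rw H2.
  cocycle_at k (gmul l g) (ginv l) (phio (ginv k) V) H3. chain_rw H3. reflexivity.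
Qed.

Lemma actc_act2inv k l A B :
  comp (actc phi k l (tens A B))
    (comp (phim k (act2inv phi l A B)) (act2inv phi k (phio l A) (phio l B)))
  = comp (act2inv phi (gmul k l) A B) (tensM (actc phi k l A) (actc phi k l B)).
Proof.
  match goal with |- ?L = _ => insert_id_l L (phio (gmul k l) (tens A B)) end.
  rewrite <- act2inv_F2. assoc_right.
  chain_rw_back (actc_comon2 phi k l A B).
  group_pair (phim k (F2 (act phi l) A B)) (phim k (act2inv phi l A B)).
  rewrite <- Fcomp, F2_act2inv by typecheck. simplify_ids.
  rewrite F2_act2inv. simplify_ids. reflexivity.
Qed.

Lemma gdot_comp l A1 A2 B1 B2 C1 C2 (u v : Mor C) :
  src v = tens A1 A2 -> tgt v = tens B1 B2 -> src u = tens B1 B2 -> tgt u = tens C1 C2 ->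
  gdot phi l A1 A2 C1 C2 (comp u v) = comp (gdot phi l B1 B2 C1 C2 u) (gdot phi l A1 A2 B1 B2 v).
Proof.
  intros. unfold gdot. rewrite Fcomp by congruence. assoc_right.
  chain_rw (act2inv_F2 l B1 B2). drop_ids. reflexivity.
Qed.

Lemma gdot_tens_at l f g A1 A2 B1 B2 :
  src f = A1 -> src g = A2 -> tgt f = B1 -> tgt g = B2 ->
  gdot phi l A1 A2 B1 B2 (tensM f g) = tensM (phim l f) (phim l g).
Proof.
  intros <- <- <- <-. unfold gdot. rewrite <- comp_assoc_r, F2nat by typecheck.
  assoc_right. rewrite F2_act2inv. drop_ids. reflexivity.
Qed.

(* Conjugating a two-step braiding (u ⊗ Y)(X ⊗ v) splits into the conjugates of
   u and v, up to phi_l^2 on the tensor factors X ⊗ Y. *)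
Lemma gdot_whiskered_pair l X Y P Q W (u v : Mor C) :
  src u = tens X Q -> tgt u = tens P X -> src v = tens Y W -> tgt v = tens Q Y ->
  comp (tensM (idm (phio l P)) (F2 (act phi l) X Y))
    (comp (gdot phi l (tens X Y) W P (tens X Y) (comp (tensM u (idm Y)) (tensM (idm X) v)))
          (tensM (act2inv phi l X Y) (idm (phio l W))))
  = comp (tensM (gdot phi l X Q P X u) (idm (phio l Y)))
         (tensM (idm (phio l X)) (gdot phi l Y W Q Y v)).
Proof.
  intros su tu sv tv. unfold gdot. rewrite !Fcomp by typecheck. assoc_right.
  chain_rw_back (F2coassoc (act phi l) P X Y).
  pose proof (F2nat (act phi l) u (idm Y)) as Nu. rewrite su, tu in Nu.
  autorewrite with mor_simpl in Nu. chain_rw Nu.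
  rewrite (F2_tens_l l X Q Y). assoc_right.
  pose proof (F2nat (act phi l) (idm X) v) as Nv. rewrite sv, tv in Nv.
  autorewrite with mor_simpl in Nv. chain_rw Nv.
  chain_rw (act2inv_coassoc l X Y W).
  chain_rw (F2_act2inv l X (tens Y W)). simplify_ids.
  rewrite !whisker_r_comp, !whisker_l_comp by typecheck. assoc_right. reflexivity.
Qed.

Lemma actc_gdot k l A1 A2 P Q (u : Mor C) : src u = tens A1 A2 -> tgt u = tens P Q ->
  comp (tensM (actc phi k l P) (actc phi k l Q))
       (gdot phi k (phio l A1) (phio l A2) (phio l P) (phio l Q) (gdot phi l A1 A2 P Q u))
  = comp (gdot phi (gmul k l) A1 A2 P Q u) (tensM (actc phi k l A1) (actc phi k l A2)).
Proof.
  intros su tu. unfold gdot. rewrite !Fcomp by typecheck. assoc_right.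
  chain_rw (actc_comon2 phi k l P Q).
  pose proof (actc_nat phi k l u) as N. rewrite su, tu in N.
  chain_rw N. chain_rw (actc_act2inv k l A1 A2). reflexivity.
Qed.

Section HalfBraiding.
Variables (g : G) (X : Ob C) (gam : Ob C -> Mor C).
Hypothesis Hgam : half_braiding (act phi g) X gam.

Lemma hb_src V : src (gam V) = tens X V. Proof. apply Hgam. Qed.
Lemma hb_tgt V : tgt (gam V) = tens (phio g V) X. Proof. apply Hgam. Qed.

Lemma hb_nat u A B : src u = A -> tgt u = B ->
  comp (gam B) (tensM (idm X) u) = comp (tensM (phim g u) (idm X)) (gam A).
Proof. intros <- <-. symmetry. apply Hgam. Qed.

Lemma hb_mul V W : comp (tensM (F2 (act phi g) V W) (idm X)) (gam (tens V W))
  = comp (tensM (idm (phio g V)) (gam W)) (tensM (gam V) (idm W)).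
Proof. apply Hgam. Qed.

Lemma hb_tens_gdot Y V P Q (u : Mor C) : src u = tens Y V -> tgt u = tens P Q ->
  comp (tensM (gdot phi g Y V P Q u) (idm X))
       (comp (tensM (idm (phio g Y)) (gam V)) (tensM (gam Y) (idm V)))
  = comp (tensM (idm (phio g P)) (gam Q)) (comp (tensM (gam P) (idm Q)) (tensM (idm X) u)).
Proof.
  intros su tu. pose proof hb_src as Hs. pose proof hb_tgt as Ht.
  chain_rw_back (hb_mul P Q). chain_rw_back (hb_mul Y V).
  rewrite (@hb_nat u (tens Y V) (tens P Q)) by auto.
  unfold gdot. rewrite !whisker_r_comp by typecheck. assoc_right.
  rewrite (@tensM_comp_chain _ (F2 (act phi g) Y V) (act2inv phi g Y V) (idm X) (idm X))
    by typecheck.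
  rewrite act2inv_F2. simplify_ids. reflexivity.
Qed.

Lemma hb_gdot_nat l u A B : src u = A -> tgt u = B ->
  comp (gdot phi l X B (phio g B) X (gam B)) (tensM (idm (phio l X)) (phim l u))
  = comp (tensM (phim l (phim g u)) (idm (phio l X))) (gdot phi l X A (phio g A) X (gam A)).
Proof.
  intros su tu. pose proof hb_src as Hs. pose proof hb_tgt as Ht.
  rewrite <- Fid, <- (@gdot_tens_at l (idm X) u X A X B) by typecheck.
  rewrite <- (@gdot_tens_at l (phim g u) (idm X) (phio g A) X (phio g B) X) by typecheck.
  rewrite <- !gdot_comp by typecheck.
  rewrite (@hb_nat u A B) by auto. reflexivity.
Qed.
End HalfBraiding.

Lemma Zhom_F0 l : Zhom phi (Zact phi l (Zunit G C)) (Zunit G C) (F0 (act phi l)).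
Proof.
  unfold Zhom, Zact, Zunit, gdot, actc3; simpl.
  split; [autorewrite with group_simpl; reflexivity|].
  split; [apply F0src|]. split; [apply F0tgt|].
  intro V. normalize. drop_ids. assoc_right. rewrite act2inv_unit_l.
  rewrite (@interchange_chain_at _ _ _ _ _ _ _ unit) by typecheck.
  rewrite (chain_rewrite2 _ _ _ _ (F2counit_r _ _)) by typecheck. drop_ids.
  rewrite tensM_unit_r, tensM_comp by typecheck. drop_ids.
  rewrite tensM_unit_absorb, actc_actcinv by typecheck. normalize. reflexivity.
Qed.

Lemma Zact_braiding_at_act g h Y gY V : half_braiding (act phi h) Y gY ->
  comp (tensM (actc phi (gmul (gmul g h) (ginv g)) g V) (idm (phio g Y)))
       (zbr (Zact phi g (mkZ h Y gY)) (phio g V))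
  = comp (tensM (actc phi g h V) (idm (phio g Y))) (gdot phi g Y V (phio h V) Y (gY V)).
Proof.
  intro HY. pose proof (hb_src h HY) as Hs. pose proof (hb_tgt h HY) as Ht.
  unfold Zact, actc3; simpl. normalize.
  rewrite tensM_comp_chain by typecheck. drop_ids.
  rewrite (chain_rewrite2 _ _ _ _ (eq_sym (act_actc_inv (gmul g h) g V))) by typecheck.
  pose proof (actc_nat phi g h (actc phi (ginv g) g V)) as N.
  autorewrite with type_simpl group_simpl obj_simpl in N. rewrite <- N.
  rewrite whisker_r_comp by typecheck. assoc_right.
  chain_rw_back (@hb_gdot_nat h _ _ HY g (actc phi (ginv g) g V)
                   (phio (ginv g) (phio g V)) V ltac:(typecheck) ltac:(typecheck)).
  rewrite tensM_comp by typecheck. drop_ids.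
  rewrite act_actc_inv_self, actc_actcinv. simplify_ids. reflexivity.
Qed.

Lemma Zhom_braiding g h X Y gX gY :
  half_braiding (act phi g) X gX -> half_braiding (act phi h) Y gY ->
  Zhom phi (Zprod phi (mkZ g X gX) (mkZ h Y gY))
           (Zprod phi (Zact phi g (mkZ h Y gY)) (mkZ g X gX)) (gX Y).
Proof.
  intros HX HY. pose proof (hb_src h HY) as Hs. pose proof (hb_tgt h HY) as Ht.
  pose proof (hb_src g HX) as Hs'. pose proof (hb_tgt g HX) as Ht'.
  pose proof (fun V => @Zact_braiding_at_act g h Y gY V HY) as Z.
  assert (ZbS : forall V, src (zbr (Zact phi g (mkZ h Y gY)) V) = tens (phio g Y) V)
    by (intro V; unfold Zact, actc3; cbn [zdeg zob zbr]; typecheck).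
  assert (ZbT : forall V, tgt (zbr (Zact phi g (mkZ h Y gY)) V)
                          = tens (phio (gmul (gmul g h) (ginv g)) V) (phio g Y))
    by (intro V; unfold Zact, actc3; cbn [zdeg zob zbr]; typecheck).
  unfold Zhom, Zprod. cbn [zdeg zob zbr].
  change (zdeg (Zact phi g (mkZ h Y gY))) with (gmul (gmul g h) (ginv g)).
  change (zob (Zact phi g (mkZ h Y gY))) with (phio g Y).
  set (Zb := zbr (Zact phi g (mkZ h Y gY))) in *. clearbody Zb.
  split; [autorewrite with group_simpl; reflexivity|].
  split; [apply Hs'|]. split; [apply Ht'|].
  intro V. normalize. assoc_right.
  rewrite (@interchange_chain_at _ (actc phi g h V) (gX Y) _ _ _ _ (tens (phio g Y) X))
    by typecheck.
  rewrite <- (hb_tens_gdot g HX Y V (phio h V) Y (gY V) (Hs V) (Ht V)).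
  rewrite !tensM_tens_id_r, !tensM_comp_chain by typecheck. drop_ids.
  rewrite (@tensM_comp_chain _ (Zb (phio g V))
             (tensM (actc phi (gmul (gmul g h) (ginv g)) g V) (idm (phio g Y))) (idm X) (idm X))
    by typecheck.
  drop_ids. rewrite Z. reflexivity.
Qed.

Lemma Zhom_actc g k l X gX : half_braiding (act phi g) X gX ->
  Zhom phi (Zact phi k (Zact phi l (mkZ g X gX))) (Zact phi (gmul k l) (mkZ g X gX))
       (actc phi k l X).
Proof.
  intros HX. pose proof (hb_src g HX) as Hs. pose proof (hb_tgt g HX) as Ht.
  unfold Zhom, Zact, actc3. cbn [zdeg zob zbr].
  split; [autorewrite with group_simpl; reflexivity|].
  split; [apply actc_src|]. split; [apply actc_tgt|].
  intro V. normalize.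
  set (W := phio (ginv l) (phio (ginv k) V)).
  rewrite (@gdot_comp k _ _ (phio l (phio g W)) (phio l X)) by typecheck.
  rewrite (@gdot_comp k _ _ (phio l X) (phio l W)) by typecheck.
  rewrite !gdot_tens_at by typecheck. normalize. assoc_right. unfold W in *.
  rewrite (@interchange_chain_at _ _ _ _ _ _ _ (phio (gmul k l) X)) by typecheck.
  rewrite (@interchange_chain_at _ _ _ _ _ _ _ (phio (gmul k l) X)) by typecheck.
  rewrite <- (actcinv_actc k l (phio g (phio (ginv l) (phio (ginv k) V)))).
  rewrite (@tensM_split_l _ (actcinv phi k l _) (actc phi k l _)) by typecheck. assoc_right.
  chain_rw (actc_gdot k l _ _ _ _ _ (Hs (phio (ginv l) (phio (ginv k) V)))
                          (Ht (phio (ginv l) (phio (ginv k) V)))).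
  repeat rewrite tensM_comp by typecheck. simplify_ids.
  repeat rewrite tensM_comp_chain by typecheck. simplify_ids.
  rewrite actcinv_mul_inv, (@tensM_split_r _ (phim (gmul k l) _)) by typecheck. assoc_right.
  normalize.
  chain_rw (@hb_gdot_nat g _ _ HX (gmul k l) (actc phi (ginv l) (ginv k) V)
              (phio (ginv l) (phio (ginv k) V)) (phio (gmul (ginv l) (ginv k)) V)
              ltac:(typecheck) ltac:(typecheck)).
  rewrite tensM_comp_chain by typecheck. simplify_ids.
  rewrite !Fcomp by typecheck. assoc_right.
  rewrite actc_conj_compose. reflexivity.
Qed.

(* Part (a).  Both half-braidings are computed to the following normal form:
   the degree isomorphisms of degree lghl^{-1}, then l.gamma_X ⊗ l.gamma_Y,
   then phi_{l,l^{-1}}^{-1}. *)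
Definition conj_prod_braiding l g h X Y (gX gY : Ob C -> Mor C) V : Mor C :=
  comp (tensM (actc phi (gmul (gmul l g) h) (ginv l) V) (idm (tens (phio l X) (phio l Y))))
   (comp (tensM (actc phi l (gmul g h) (phio (ginv l) V)) (idm (tens (phio l X) (phio l Y))))
    (comp (tensM (phim l (actc phi g h (phio (ginv l) V))) (idm (tens (phio l X) (phio l Y))))
     (comp (tensM (gdot phi l X (phio h (phio (ginv l) V)) (phio g (phio h (phio (ginv l) V))) X
                      (gX (phio h (phio (ginv l) V))))
                  (idm (phio l Y)))
      (comp (tensM (idm (phio l X))
                   (gdot phi l Y (phio (ginv l) V) (phio h (phio (ginv l) V)) Y
                         (gY (phio (ginv l) V))))
            (tensM (idm (phio l X)) (tensM (idm (phio l Y)) (actcinv phi l (ginv l) V))))))).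

Lemma Zprod_Zact_braiding g h l X Y gX gY V :
  half_braiding (act phi g) X gX -> half_braiding (act phi h) Y gY ->
  zbr (Zprod phi (Zact phi l (mkZ g X gX)) (Zact phi l (mkZ h Y gY))) V
  = conj_prod_braiding l g h X Y gX gY V.
Proof.
  intros HX HY. pose proof (hb_src h HY) as Hs. pose proof (hb_tgt h HY) as Ht.
  pose proof (hb_src g HX) as Hs'. pose proof (hb_tgt g HX) as Ht'.
  unfold Zprod, Zact, conj_prod_braiding, actc3. cbn [zdeg zob zbr].
  normalize. rewrite !whisker_r_comp, !whisker_l_comp by typecheck. normalize. assoc_right.
  pose proof (f_equal (fun m => tensM (idm (phio l X)) (tensM m (idm (phio l Y))))
                      (actc_conj_shift l h V)) as Shift.
  cbn beta in Shift. rewrite !whisker_lr_comp in Shift by typecheck.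
  chain_rw Shift. rewrite <- !tensM_assoc.
  rewrite (@tensM_comp_chain _
             (tensM (idm (phio l X)) (phim l (actcinv phi (ginv l) (gmul (gmul l h) (ginv l)) V)))
             (gdot phi l X _ _ _ _)) by typecheck.
  rewrite (@tensM_comp_chain _ (tensM (idm (phio l X)) (phim l (actc phi h (ginv l) V))))
    by typecheck.
  drop_ids.
  chain_rw (@hb_gdot_nat g _ _ HX l (actcinv phi (ginv l) (gmul (gmul l h) (ginv l)) V)
              (phio (gmul h (ginv l)) V) (phio (ginv l) (phio (gmul (gmul l h) (ginv l)) V))
              ltac:(typecheck) ltac:(typecheck)).
  chain_rw (@hb_gdot_nat g _ _ HX l (actc phi h (ginv l) V)
              (phio h (phio (ginv l) V)) (phio (gmul h (ginv l)) V)
              ltac:(typecheck) ltac:(typecheck)).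
  rewrite !whisker_r_comp by typecheck. assoc_right. normalize.
  pose proof (f_equal (fun m => tensM m (idm (tens (phio l X) (phio l Y))))
                      (actc_conj_merge l g h V)) as Merge.
  cbn beta in Merge. rewrite !whisker_r_comp in Merge by typecheck.
  chain_rw Merge. normalize. reflexivity.
Qed.

Lemma Zact_Zprod_braiding g h l X Y gX gY V :
  half_braiding (act phi g) X gX -> half_braiding (act phi h) Y gY ->
  comp (tensM (idm (phio (gmul (gmul (gmul l g) h) (ginv l)) V)) (F2 (act phi l) X Y))
   (comp (zbr (Zact phi l (Zprod phi (mkZ g X gX) (mkZ h Y gY))) V)
         (tensM (act2inv phi l X Y) (idm V)))
  = conj_prod_braiding l g h X Y gX gY V.
Proof.
  intros HX HY. pose proof (hb_src h HY) as Hs. pose proof (hb_tgt h HY) as Ht.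
  pose proof (hb_src g HX) as Hs'. pose proof (hb_tgt g HX) as Ht'.
  unfold Zprod, Zact, conj_prod_braiding, actc3. cbn [zdeg zob zbr].
  normalize. rewrite !whisker_r_comp by typecheck. normalize. assoc_right.
  rewrite (@interchange_chain_at _ _ _ _ _ _ _ (tens (phio l X) (phio l Y))) by typecheck.
  rewrite (@interchange_chain_at _ _ _ _ _ _ _ (tens (phio l X) (phio l Y))) by typecheck.
  rewrite (@gdot_comp l _ _ (phio g (phio h (phio (ginv l) V))) (tens X Y)) by typecheck.
  rewrite gdot_tens_at by typecheck. normalize. assoc_right.
  rewrite (@interchange_chain_at _ _ _ _ _ _ _ (tens (phio l X) (phio l Y))) by typecheck.
  rewrite (@interchange_at _ (act2inv phi l X Y) (actcinv phi l (ginv l) V)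
             (tens (phio l X) (phio l Y)) _ _ (phio l (phio (ginv l) V))) by typecheck.
  chain_rw (gdot_whiskered_pair l _ _ _ _ _ _ _ (Hs' (phio h (phio (ginv l) V))) (Ht' _)
                                  (Hs (phio (ginv l) V)) (Ht _)).
  normalize. reflexivity.
Qed.

Lemma Zhom_act2inv g h l X Y gX gY :
  half_braiding (act phi g) X gX -> half_braiding (act phi h) Y gY ->
  Zhom phi (Zprod phi (Zact phi l (mkZ g X gX)) (Zact phi l (mkZ h Y gY)))
           (Zact phi l (Zprod phi (mkZ g X gX) (mkZ h Y gY))) (act2inv phi l X Y).
Proof.
  intros HX HY. split; [cbn [zdeg Zprod Zact]; autorewrite with group_simpl; reflexivity|].
  split; [apply act2inv_src|]. split; [apply act2inv_tgt|].
  intro V. cbn [zdeg Zprod Zact]. normalize.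
  rewrite (@Zprod_Zact_braiding g h l X Y gX gY V HX HY).
  rewrite <- (@Zact_Zprod_braiding g h l X Y gX gY V HX HY).
  pose proof (hb_src h HY) as Hs. pose proof (hb_tgt h HY) as Ht.
  pose proof (hb_src g HX) as Hs'. pose proof (hb_tgt g HX) as Ht'.
  apply cancel_whiskered_inverse with (A := phio l (tens X Y)); try apply act2inv_F2;
    unfold Zact, Zprod, actc3; cbn [zdeg zob zbr]; typecheck.
Qed.
End ActionCalculus.

Theorem mainTheorem4 (G : Group) (C : SMCat) (phi : Action G C)
    (g h k l : G) (X Y : Ob C) (gX gY : Ob C -> Mor C) :
  half_braiding (act phi g) X gX ->
  half_braiding (act phi h) Y gY ->
  let A := mkZ g X gX in
  let B := mkZ h Y gY in
  (* (a) *)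
  Zhom phi (Zprod phi (Zact phi l A) (Zact phi l B)) (Zact phi l (Zprod phi A B))
       (act2inv phi l X Y)
  (* (b) *)
  /\ Zhom phi (Zact phi l (Zunit G C)) (Zunit G C) (F0 (act phi l))
  (* (c) *)
  /\ Zhom phi (Zact phi k (Zact phi l A)) (Zact phi (gmul k l) A) (actc phi k l X)
  (* (d) *)
  /\ Zhom phi (Zprod phi A B) (Zprod phi (Zact phi g B) A) (gX Y).
Proof.
  intros HX HY A B.
  split; [| split; [| split]].
  - apply Zhom_act2inv; assumption.
  - apply Zhom_F0.
  - apply Zhom_actc; assumption.
  - apply Zhom_braiding; assumption.
Qed.
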